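(* Fix a time $t$, a horizon step $h\in\{1,\dots,H\}$, $\overline{\delta}\in(0,1)$ and $\alpha\in[0,1]$. Suppose $M_t$ obstacles are partitioned into a set $S_1$ of $M^1$ obstacles assigned to prediction model $P^1$ and a set $S_2$ of $M^2=M_t-M^1$ obstacles assigned to prediction model $P^2$. For each obstacle $k$ let $Y_k[t+h]\in\mathbb{R}^n$ be its (random) true position at time $t+h$, $\hat{Y}_k^{\phi(t,k)}[t+h\mid t]$ its predicted position under its assigned model $P^{\phi(t,k)}$, and $\epsilon^{\phi(t,k)}[t+h\mid t]>0$ the associated conformal radius; let $A_k=\{\|Y_k[t+h]-\hat{Y}_k^{\phi(t,k)}[t+h\mid t]\|\le \epsilon^{\phi(t,k)}[t+h\mid t]\}$ and suppose $\mathbb{P}(A_k)\ge 1-\overline{\delta}$ for every $k$. Assume the obstacles are non-interacting, i.e. the events $A_k$ ($k\in S_1\cup S_2$) are mutually independent. Let $X_k$ be the indicator of $A_k$. Then $$\mathbb{P}\Big(\bigcap_{k\in S_1}\{X_k=1\}\ \cap\ \Big\{\sum_{k\in S_2}X_k\ge \alpha M^2\Big\}\Big)\ \ge\ (1-\overline{\delta})^{M^1}\sum_{j=\lceil \alpha M^2\rceil}^{M^2}\binom{M^2}{j}(1-\overline{\delta})^j\,\overline{\delta}^{\,M^2-j}.$$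
   Context: An agent predicts the future trajectories of local obstacles using two prediction models $P^1$ (more accurate, slower) and $P^2$ (less accurate, faster); a routing function $\phi$ assigns each obstacle $k$ one of them, and the model outputs a predicted position $\hat{Y}_k^{\phi(t,k)}[t+h\mid t]$. The conformal radius is a positive number computed from calibration data. The parameter $\alpha$ is a ''partial coverage'' rate: only a fraction $\alpha$ of the $P^2$-routed obstacles is required to lie within their conformal radius. ''Non-interacting obstacles'' is used in the paper to mean that the coverage events of different obstacles are independent. *)

From HB Require Import structures.
From mathcomp Require Import all_boot all_order all_algebra.
From mathcomp Require Import all_classical all_reals all_analysis.
Set Implicit Arguments. Unset Strict Implicit. Unset Printing Implicit Defensive.
Import Order.TTheory GRing.Theory Num.Theory.
Local Open Scope classical_set_scope.
Local Open Scope ring_scope.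

Definition eucl_norm (R : realType) (n : nat) (v : 'rV[R]_n) : R :=
  Num.sqrt (\sum_(i < n) v ord0 i ^+ 2).

Definition mutually_independent (d : measure_display) (T : measurableType d)
  (R : realType) (P : probability T R) (I : finType) (A : I -> set T) : Prop :=
  forall J : {set I},
    P (\bigcap_(j in [set j | j \in J]) A j) = (\prod_(j in J) P (A j))%E.

From HB Require Import structures.
From mathcomp Require Import all_boot all_order all_algebra.
From mathcomp Require Import all_classical all_reals all_analysis.
From mathcomp Require Import ring lra.
Set Implicit Arguments. Unset Strict Implicit. Unset Printing Implicit Defensive.
Import Order.TTheory GRing.Theory Num.Theory.
Local Open Scope classical_set_scope.
Local Open Scope ring_scope.

(* Write G(L, K, c) for the event that every A_j with j in L occurs and at
   least c of the A_k with k in K occur.  Splitting on one k in K and using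
   independence gives
     P G(L, k + K, c) = p_k P G(L, K, c - 1) + (1 - p_k) P G(L, K, c),
   the recursion of the binomial tail.  As P G(L, K, c) is antitone in c,
   lowering p_k to q = 1 - delta can only decrease the right-hand side, so
   induction on K yields P G(L, K, c) >= P(cap_L A_j) P(Bin(|K|, q) >= c),
   and P(cap_L A_j) >= q^|L| by the product rule. *)

Lemma finset_ind (I : finType) (Q : {set I} -> Prop) :
  Q finset.set0 -> (forall k (K : {set I}), k \notin K -> Q K -> Q (k |: K)) ->
  forall K, Q K.
Proof.
move=> Q0 QU K; have [n] := ubnP #|K|; elim: n K => // n IH K.
have [-> _ //|[k kK]] := set_0Vmem K.
rewrite ltnS (cardsD1 k) kK => ltKn.
by rewrite -(finset.setD1K kK); apply: QU; [rewrite finset.setD11 | exact: IH].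
Qed.

Section BinomialTail.
Variable R : realFieldType.
Implicit Types (p c : R) (m : nat).

Definition binom_pmf p m j : R := 'C(m, j)%:R * p ^+ j * (1 - p) ^+ (m - j).

Definition binom_tail p m c : R := \sum_(j < m.+1 | c <= j%:R) binom_pmf p m j.

Lemma binom_pmf_small p m j : (m < j)%N -> binom_pmf p m j = 0.
Proof. by move=> ltmj; rewrite /binom_pmf bin_small // !mul0r. Qed.

Lemma binom_pmfS0 p m : binom_pmf p m.+1 0 = (1 - p) * binom_pmf p m 0.
Proof. by rewrite /binom_pmf !bin0 !subn0 exprS; ring. Qed.

Lemma binom_pmfSS p m j :
  binom_pmf p m.+1 j.+1 = p * binom_pmf p m j + (1 - p) * binom_pmf p m j.+1.
Proof.
rewrite /binom_pmf binS natrD subSS.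
have [lemj|ltjm] := leqP m j.
  by rewrite (@bin_small m j.+1) ?ltnS // exprS; ring.
rewrite -(subnSK ltjm) !exprS; ring.
Qed.

Lemma binom_tail0 p c : binom_tail p 0 c = if c <= 0 then 1 else 0.
Proof.
rewrite /binom_tail big_mkcond big_ord_recl big_ord0 /= addr0.
by case: ifP; rewrite /binom_pmf ?bin0 ?expr0 ?mulr1.
Qed.

Lemma binom_tailS p m c :
  binom_tail p m.+1 c = p * binom_tail p m (c - 1) + (1 - p) * binom_tail p m c.
Proof.
pose shifted := \sum_(i < m.+1) (if c <= i.+1%:R then binom_pmf p m i.+1 else 0).
have -> : binom_tail p m.+1 c = (if c <= 0 then (1 - p) * binom_pmf p m 0 else 0)
    + (p * binom_tail p m (c - 1) + (1 - p) * shifted).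
  rewrite /binom_tail big_mkcond big_ord_recl /= binom_pmfS0; congr (_ + _).
  rewrite !mulr_sumr [in RHS]big_mkcond -big_split; apply: eq_bigr => i _ /=.
  rewrite lerBlDr -natr1 /bump /= add1n.
  by case: ifP; rewrite ?binom_pmfSS ?mulr0 ?addr0.
rewrite addrCA; congr (_ + _).
rewrite /binom_tail big_mkcond big_ord_recl /shifted big_ord_recr /=.
by rewrite (@binom_pmf_small p m m.+1) // !if_same addr0 mulrDr; case: ifP; rewrite ?mulr0.
Qed.

Lemma binom_tail_ge0 p m c : 0 <= p <= 1 -> 0 <= binom_tail p m c.
Proof.
move=> /andP[p0 p1]; apply: sumr_ge0 => j _.
by rewrite !mulr_ge0 // exprn_ge0 // subr_ge0.
Qed.

End BinomialTail.

Section IndependentEvents.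
Variables (d : measure_display) (T : measurableType d) (R : realType)
  (P : probability T R) (I : finType) (A : I -> set T).
Hypothesis mA : forall k, measurable (A k).
Implicit Types (L K : {set I}) (k : I) (c : R) (X Y : set T) (w : T).

Definition pr X : R := fine (P X).

Definition capA L : set T := \bigcap_(j in [set j | j \in L]) A j.

Definition nhits K w : R := \sum_(k in K) \1_(A k) w.

Definition capA_hits_ge L K c : set T := capA L `&` [set w | c <= nhits K w].

Lemma prE X : measurable X -> P X = (pr X)%:E.
Proof. by move=> mX; rewrite /pr fineK // fin_num_measure. Qed.

Lemma pr_ge0 X : 0 <= pr X.
Proof. by rewrite /pr fine_ge0 // measure_ge0. Qed.

Lemma prU X Y : measurable X -> measurable Y -> X `&` Y = set0 ->
  pr (X `|` Y) = pr X + pr Y.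
Proof. by move=> mX mY XY; rewrite /pr measureU // fineD // fin_num_measure. Qed.

Lemma prDI X Y : measurable X -> measurable Y -> pr X = pr (X `\` Y) + pr (X `&` Y).
Proof.
move=> mX mY; rewrite /pr (measureDI P mX mY) fineD // fin_num_measure //.
  exact: measurableD.
exact: measurableI.
Qed.

Lemma le_pr X Y : measurable X -> measurable Y -> X `<=` Y -> pr X <= pr Y.
Proof.
move=> mX mY XY; rewrite -lee_fin -(prE mX) -(prE mY).
by apply: le_measure => //; rewrite inE.
Qed.

Lemma measurable_capA L : measurable (capA L).
Proof. by apply: fin_bigcap_measurable => //; exact: finite_finset. Qed.

Lemma measurable_nhits K : measurable_fun setT (nhits K).
Proof.
have -> : nhits K = fun w => \sum_(k <- index_enum I) (if k \in K then \1_(A k) w else 0).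
  by apply/funext => w; rewrite /nhits big_mkcond.
apply: measurable_sum => k; case: (k \in K); last exact: measurable_cst.
exact: measurable_realfun.measurable_indic.
Qed.

Lemma measurable_capA_hits_ge L K c : measurable (capA_hits_ge L K c).
Proof.
apply: measurableI; first exact: measurable_capA.
have := measurable_nhits K measurableT (measurable_itv `[c, +oo[).
by rewrite setTI; congr measurable; apply/seteqP; split => w /=; rewrite in_itv /= andbT.
Qed.

Lemma capAU1 k L : capA (k |: L) = A k `&` capA L.
Proof.
apply/seteqP; split => w /=.
  by move=> capw; split=> [|j /= jL]; apply: capw; rewrite /= ?setU11 ?setU1r.
by move=> [Akw capw] j /=; rewrite in_setU1 => /orP[/eqP -> //|]; exact: capw.
Qed.

Lemma capAE L : capA L = [set w | forall k, k \in L -> \1_(A k) w = 1 :> R].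
Proof.
apply/seteqP; split => w /= capw k kL.
  by rewrite indicE mem_set //; exact: capw.
have := capw k kL; rewrite indicE.
by case: (boolP (w \in A k)) => [/set_mem|_ /esym/eqP]; rewrite ?oner_eq0.
Qed.

Lemma nhitsU1 k K w : k \notin K -> nhits (k |: K) w = \1_(A k) w + nhits K w.
Proof. by move=> kK; rewrite /nhits big_setU1. Qed.

Lemma capA_hits_ge0 L c :
  capA_hits_ge L finset.set0 c = if c <= 0 then capA L else set0.
Proof.
rewrite /capA_hits_ge /nhits; under eq_set => w do rewrite big_set0.
by case: ifP => c0; apply/seteqP; split => w /= => [[] //|]; split.
Qed.

Lemma capA_hits_geU1l k L K c :
  capA_hits_ge (k |: L) K c = A k `&` capA_hits_ge L K c.
Proof. by rewrite /capA_hits_ge capAU1 setIA. Qed.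

Lemma capA_hits_geU1r k L K c : k \notin K ->
  capA_hits_ge L (k |: K) c =
  capA_hits_ge (k |: L) K (c - 1) `|` (capA_hits_ge L K c `\` A k).
Proof.
move=> kK; rewrite capA_hits_geU1l /capA_hits_ge.
apply/seteqP; split => w /=; rewrite nhitsU1 // indicE.
  move=> [capw]; have [Akw|Akw] := pselect (A k w).
    by rewrite mem_set //= => hits; left; split=> //; split=> //; lra.
  by rewrite memNset //= add0r => hits; right.
move=> [[Akw [capw hits]]|[[capw hits] Akw]]; split => //.
  by rewrite mem_set //=; lra.
by rewrite memNset // add0r.
Qed.

Lemma capA_hits_ge_anti L K c c' : c' <= c ->
  capA_hits_ge L K c `<=` capA_hits_ge L K c'.
Proof. by move=> c'c w [capw hits]; split=> //=; apply: le_trans hits. Qed.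

Lemma pr_capA_hits_geU1r k L K c : k \notin K ->
  pr (capA_hits_ge L (k |: K) c) + pr (capA_hits_ge (k |: L) K c) =
  pr (capA_hits_ge (k |: L) K (c - 1)) + pr (capA_hits_ge L K c).
Proof.
move=> kK; have mG := measurable_capA_hits_ge.
rewrite capA_hits_geU1r // prU //; last 2 first.
- by apply: measurableD; [exact: mG | exact: mA].
- by rewrite capA_hits_geU1l; apply/seteqP; split => w // [[Akw _] [_ /(_ Akw)]].
rewrite [pr (capA_hits_ge L K c)](prDI _ (mA k)) // [_ `&` A k]setIC.
by rewrite -capA_hits_geU1l addrA.
Qed.

Hypothesis indep : mutually_independent P A.

Lemma pr_capA L : pr (capA L) = \prod_(j in L) pr (A j).
Proof.
rewrite /pr /capA indep (eq_bigr (fun j => (pr (A j))%:E)) => [|j _].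
  by rewrite prodEFin.
exact: prE.
Qed.

(* Independence is only given as a product rule for intersections, so the
   induction step expresses every event through the complement-free
   identity [pr_capA_hits_geU1r]. *)
Lemma pr_capA_hits_ge_indep k L K c : k \notin L -> k \notin K ->
  pr (capA_hits_ge (k |: L) K c) = pr (A k) * pr (capA_hits_ge L K c).
Proof.
elim/finset_ind: K L c => [|k' K k'K IH] L c kL.
  rewrite !capA_hits_ge0; case: ifP => _; last by rewrite /pr measure0 mulr0.
  by rewrite !pr_capA big_setU1.
rewrite in_setU1 negb_or => /andP[kk' kK].
have kk'L : k \notin k' |: L by rewrite in_setU1 negb_or kk' kL.
have splitkL := pr_capA_hits_geU1r (k |: L) c k'K.
have splitL := pr_capA_hits_geU1r L c k'K.
rewrite finset.setUCA !IH // in splitkL.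
move/(congr1 (fun x => pr (A k) * x)): splitL; rewrite /= !mulrDr.
lra.
Qed.

Lemma pr_capA_hits_geU1 k L K c : k \notin L -> k \notin K ->
  pr (capA_hits_ge L (k |: K) c) =
  pr (A k) * pr (capA_hits_ge L K (c - 1)) + (1 - pr (A k)) * pr (capA_hits_ge L K c).
Proof.
move=> kL kK; have := pr_capA_hits_geU1r L c kK.
rewrite !pr_capA_hits_ge_indep //; lra.
Qed.

Section LowerBound.
Variable q : R.
Hypotheses (q01 : 0 <= q <= 1) (qA : forall k, q <= pr (A k)).

Lemma pr_capA_ge L : q ^+ #|L| <= pr (capA L).
Proof.
rewrite pr_capA -prodr_const; apply: ler_prod => j _.
by rewrite qA andbT; case/andP: q01.
Qed.

Lemma pr_capA_hits_ge_lower L K c : [disjoint L & K]%B ->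
  pr (capA L) * binom_tail q #|K| c <= pr (capA_hits_ge L K c).
Proof.
elim/finset_ind: K L c => [|k K kK IH] L c.
  rewrite cards0 binom_tail0 capA_hits_ge0.
  by case: ifP => _ _; rewrite ?mulr1 ?mulr0 /pr ?measure0.
move=> dLkK; have dLK := disjointWr (finset.subsetUr [set k] K) dLkK.
have kL : k \notin L by rewrite (disjointFl dLkK) ?finset.setU11.
rewrite cardsU1 kK binom_tailS pr_capA_hits_geU1 //.
have antitone_c : pr (capA_hits_ge L K c) <= pr (capA_hits_ge L K (c - 1)).
  apply: le_pr; try exact: measurable_capA_hits_ge.
  by apply: capA_hits_ge_anti; rewrite lerBlDr lerDl.
have IHc1 := IH L (c - 1) dLK; have IHc := IH L c dLK.
have := qA k; have := pr_ge0 (capA L); case/andP: q01.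
(* (p_k - q) (G(c - 1) - G(c)) >= 0 *)
nra.
Qed.

End LowerBound.

End IndependentEvents.

Theorem lemma4 (d : measure_display) (T : measurableType d) (R : realType)
  (P : probability T R) (n Mt : nat)
  (phi : 'I_Mt -> 'I_2)
  (Y : 'I_Mt -> T -> 'rV[R]_n)
  (Yhat : 'I_2 -> 'I_Mt -> T -> 'rV[R]_n)
  (eps : 'I_2 -> R)
  (delta alpha : R) :
  0 < delta < 1 -> 0 <= alpha <= 1 ->
  (forall m, 0 < eps m) ->
  let A := fun k : 'I_Mt =>
    [set w | eucl_norm (Y k w - Yhat (phi k) k w) <= eps (phi k)] in
  let S1 := [set k | phi k == 0]%SET in
  let S2 := [set k | phi k == 1]%SET in
  let M1 := #|S1| in
  let M2 := #|S2| in
  (forall k, measurable (A k)) ->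
  (forall k, ((1 - delta)%:E <= P (A k))%E) ->
  mutually_independent P A ->
  (((1 - delta) ^+ M1 *
     \sum_(j < M2.+1 | (Num.ceil (alpha * M2%:R) <= j%:Z)%R)
        ('C(M2, j)%:R * (1 - delta) ^+ j * delta ^+ (M2 - j)))%:E
   <= P ([set w | forall k, k \in S1 -> (\1_(A k) w : R) = 1%R] `&`
         [set w | (alpha * M2%:R <= \sum_(k in S2) (\1_(A k) w : R))%R]))%E.
Proof.
move=> /andP[delta0 delta1] _ _ A S1 S2 M1 M2 mA PA indep.
have q01 : 0 <= 1 - delta <= 1 by apply/andP; split; lra.
have qA k : 1 - delta <= pr P (A k) by rewrite -lee_fin -prE.
have dS12 : [disjoint S1 & S2]%B.
  by rewrite -setI_eq0; apply/eqP/setP => k; rewrite !inE; case: eqP => // ->.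
rewrite -(capAE R) (prE _ (measurable_capA_hits_ge mA _ _ _)) lee_fin.
have -> : \sum_(j < M2.+1 | Num.ceil (alpha * M2%:R) <= j%:Z)
    ('C(M2, j)%:R * (1 - delta) ^+ j * delta ^+ (M2 - j)) =
    binom_tail (1 - delta) M2 (alpha * M2%:R).
  by apply: eq_big => [j|j _]; rewrite ?ceil_le_int /binom_pmf ?subKr.
apply: le_trans (pr_capA_hits_ge_lower mA indep q01 qA _ dS12).
by apply: ler_wpM2r; [exact: binom_tail_ge0 | exact: pr_capA_ge].
Qed.
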